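(* Let $v\ge2$ and $M,N\in{\cal I}_v$ with $M\perp N$ with respect to the scalar product $(x,y):=\mathrm{Re}(xy^* )$. Then $$[e^M,e^N]=2\,\frac{\sin|M|}{|M|}\,\frac{\sin|N|}{|N|}\,MN .$$
   Context: ${\cal A}_v$ is the real Cayley-Dickson algebra of dimension $2^v$, $z^*$ its conjugation, $\mathrm{Re}(z)=(z+z^* )/2$, $|z|=(zz^* )^{1/2}$, ${\cal I}_v=\{z:\mathrm{Re}(z)=0\}$. For $M\in{\cal I}_v$, $e^M=\cos|M|+\frac{\sin|M|}{|M|}M$ (with $\frac{\sin|M|}{|M|}:=1$ when $M=0$). $[a,b]:=ab-ba$. *)

(* real Cayley-Dickson algebras A_v of dimension 2^v over R. *)
From Stdlib Require Import Reals.
Open Scope R_scope.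

Fixpoint CD (v : nat) : Type :=
  match v with 0 => R | S n => (CD n * CD n)%type end.

Fixpoint cd_const (v : nat) (r : R) : CD v :=
  match v return CD v with 0 => r | S n => (cd_const n r, cd_const n 0) end.

Definition cd_zero (v : nat) : CD v := cd_const v 0.

Fixpoint cd_add (v : nat) : CD v -> CD v -> CD v :=
  match v return CD v -> CD v -> CD v with
  | 0 => Rplus
  | S n => fun x y => (cd_add n (fst x) (fst y), cd_add n (snd x) (snd y))
  end.

Fixpoint cd_opp (v : nat) : CD v -> CD v :=
  match v return CD v -> CD v with
  | 0 => Ropp
  | S n => fun x => (cd_opp n (fst x), cd_opp n (snd x))
  end.

Definition cd_sub (v : nat) (x y : CD v) : CD v := cd_add v x (cd_opp v y).

Fixpoint cd_scal (v : nat) (r : R) : CD v -> CD v :=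
  match v return CD v -> CD v with
  | 0 => fun x => r * x
  | S n => fun x => (cd_scal n r (fst x), cd_scal n r (snd x))
  end.

Fixpoint cd_conj (v : nat) : CD v -> CD v :=
  match v return CD v -> CD v with
  | 0 => fun x => x
  | S n => fun x => (cd_conj n (fst x), cd_opp n (snd x))
  end.

(* Cayley-Dickson product: (a,b)(c,d) = (ac - d^* b, d a + b c^* ) *)
Fixpoint cd_mul (v : nat) : CD v -> CD v -> CD v :=
  match v return CD v -> CD v -> CD v with
  | 0 => Rmult
  | S n => fun x y =>
      (cd_sub n (cd_mul n (fst x) (fst y)) (cd_mul n (cd_conj n (snd y)) (snd x)),
       cd_add n (cd_mul n (snd y) (fst x)) (cd_mul n (snd x) (cd_conj n (fst y))))
  end.

(* real part: the coefficient of the unit; equals (z + z^* )/2 viewed in R *)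
Fixpoint cd_re (v : nat) : CD v -> R :=
  match v return CD v -> R with
  | 0 => fun x => x
  | S n => fun x => cd_re n (fst x)
  end.

(* |z| = (z z^* )^{1/2}  (z z^* is real) *)
Definition cd_norm (v : nat) (z : CD v) : R := sqrt (cd_re v (cd_mul v z (cd_conj v z))).

Definition cd_dot (v : nat) (x y : CD v) : R := cd_re v (cd_mul v x (cd_conj v y)).

Definition sinc (t : R) : R := if Req_EM_T t 0 then 1 else sin t / t.

Definition cd_exp (v : nat) (M : CD v) : CD v :=
  cd_add v (cd_const v (cos (cd_norm v M))) (cd_scal v (sinc (cd_norm v M)) M).

Definition cd_comm (v : nat) (a b : CD v) : CD v :=
  cd_sub v (cd_mul v a b) (cd_mul v b a).

(* Orthogonal pure imaginary elements anticommute: polarizing [z z^* = |z|^2] gives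
   [x y^* + y x^* = 2 (x, y)], and [M^* = -M], [N^* = -N] turn this into [N M = - M N]
   when [(M, N) = 0].  Since [e^M] and [e^N] are real combinations of [1, M] and [1, N],
   bilinearity leaves only [sinc|M| sinc|N| [M, N] = 2 sinc|M| sinc|N| M N]. *)
From Stdlib Require Import Reals Lra Lia.
Open Scope R_scope.

(* The coordinates of [x : CD n] in the standard basis; the parity of the index
   selects the half of the pair and [Nat.div2] indexes inside it. *)
Fixpoint coord (n : nat) : CD n -> nat -> R :=
  match n return CD n -> nat -> R with
  | 0 => fun x i => if Nat.eqb i 0 then x else 0
  | S m => fun x i => if Nat.even i then coord m (fst x) (Nat.div2 i)
                      else coord m (snd x) (Nat.div2 i)
  end.

Lemma even_div2_double i :
  Nat.even (2 * i) = true /\ Nat.div2 (2 * i) = i /\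
  Nat.even (S (2 * i)) = false /\ Nat.div2 (S (2 * i)) = i.
Proof.
  rewrite Nat.even_even, Nat.div2_double, Nat.div2_succ_double.
  replace (S (2 * i)) with (2 * i + 1)%nat by lia.
  rewrite Nat.even_odd; auto.
Qed.

Lemma cd_ext n (x y : CD n) : (forall i, coord n x i = coord n y i) -> x = y.
Proof.
  induction n as [|n IH]; intros H; [exact (H 0%nat)|].
  destruct x as [a b], y as [c d].
  f_equal; apply IH; intro i; destruct (even_div2_double i) as (E0 & D0 & E1 & D1).
  - specialize (H (2 * i)%nat); cbn [coord fst snd] in H.
    rewrite E0, D0 in H; exact H.
  - specialize (H (S (2 * i))); cbn [coord fst snd] in H.
    rewrite E1, D1 in H; exact H.
Qed.

Lemma coord_add n x y i : coord n (cd_add n x y) i = coord n x i + coord n y i.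
Proof.
  revert i; induction n as [|n IH]; intro i; simpl.
  - destruct (Nat.eqb i 0); ring.
  - destruct (Nat.even i); apply IH.
Qed.

Lemma coord_opp n x i : coord n (cd_opp n x) i = - coord n x i.
Proof.
  revert i; induction n as [|n IH]; intro i; simpl.
  - destruct (Nat.eqb i 0); ring.
  - destruct (Nat.even i); apply IH.
Qed.

Lemma coord_scal n r x i : coord n (cd_scal n r x) i = r * coord n x i.
Proof.
  revert i; induction n as [|n IH]; intro i; simpl.
  - destruct (Nat.eqb i 0); ring.
  - destruct (Nat.even i); apply IH.
Qed.

Lemma coord_sub n x y i : coord n (cd_sub n x y) i = coord n x i - coord n y i.
Proof. unfold cd_sub; rewrite coord_add, coord_opp; ring. Qed.

Lemma coord_const n r i : coord n (cd_const n r) i = if Nat.eqb i 0 then r else 0.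
Proof.
  revert r i; induction n as [|n IH]; intros r i; [reflexivity|].
  destruct i as [|[|i]]; cbn [coord fst snd cd_const].
  - simpl; rewrite IH; reflexivity.
  - simpl; rewrite IH; reflexivity.
  - rewrite Nat.even_succ_succ; simpl Nat.div2.
    destruct (Nat.even i); rewrite IH; simpl; destruct (Nat.div2 i =? 0)%nat; reflexivity.
Qed.

Lemma coord_conj n x i :
  coord n (cd_conj n x) i = if Nat.eqb i 0 then coord n x i else - coord n x i.
Proof.
  revert i; induction n as [|n IH]; intro i.
  - simpl; destruct (Nat.eqb i 0); auto; ring.
  - destruct i as [|[|i]].
    + simpl; rewrite IH; reflexivity.
    + simpl; rewrite coord_opp; reflexivity.
    + cbn [coord fst snd cd_conj]; rewrite Nat.even_succ_succ; simpl Nat.div2.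
      destruct (Nat.even i); rewrite ?IH, ?coord_opp; simpl; auto.
Qed.

Lemma cd_re_coord n x : cd_re n x = coord n x 0.
Proof. induction n as [|n IH]; simpl; auto. Qed.

Ltac cd_linear :=
  apply cd_ext; intro i;
  repeat first [ rewrite coord_sub | rewrite coord_add | rewrite coord_opp
               | rewrite coord_scal | rewrite coord_const | rewrite coord_conj ];
  repeat match goal with |- context [Nat.eqb ?j 0] => destruct (Nat.eqb j 0) end;
  ring.

Lemma cd_conjK n x : cd_conj n (cd_conj n x) = x.
Proof. cd_linear. Qed.

Lemma cd_conj_add n x y : cd_conj n (cd_add n x y) = cd_add n (cd_conj n x) (cd_conj n y).
Proof. cd_linear. Qed.

Lemma cd_conj_scal n r x : cd_conj n (cd_scal n r x) = cd_scal n r (cd_conj n x).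
Proof. cd_linear. Qed.

Lemma cd_conj_opp n x : cd_conj n (cd_opp n x) = cd_opp n (cd_conj n x).
Proof. cd_linear. Qed.

Lemma cd_conj_const n r : cd_conj n (cd_const n r) = cd_const n r.
Proof. cd_linear. Qed.

Lemma cd_opp_scal n x : cd_opp n x = cd_scal n (-1) x.
Proof. cd_linear. Qed.

Lemma cd_mul_add n :
  (forall x y z, cd_mul n (cd_add n x y) z = cd_add n (cd_mul n x z) (cd_mul n y z)) /\
  (forall x y z, cd_mul n z (cd_add n x y) = cd_add n (cd_mul n z x) (cd_mul n z y)).
Proof.
  induction n as [|n [IHl IHr]]; simpl; [split; intros; ring|].
  split; intros [] [] []; simpl; rewrite ?cd_conj_add, ?IHl, ?IHr; f_equal; cd_linear.
Qed.

Lemma cd_mul_addl n x y z :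
  cd_mul n (cd_add n x y) z = cd_add n (cd_mul n x z) (cd_mul n y z).
Proof. apply cd_mul_add. Qed.

Lemma cd_mul_addr n x y z :
  cd_mul n z (cd_add n x y) = cd_add n (cd_mul n z x) (cd_mul n z y).
Proof. apply cd_mul_add. Qed.

Lemma cd_mul_scal n r :
  (forall x y, cd_mul n (cd_scal n r x) y = cd_scal n r (cd_mul n x y)) /\
  (forall x y, cd_mul n x (cd_scal n r y) = cd_scal n r (cd_mul n x y)).
Proof.
  induction n as [|n [IHl IHr]]; simpl; [split; intros; ring|].
  split; intros [] []; simpl; rewrite ?cd_conj_scal, ?IHl, ?IHr; f_equal; cd_linear.
Qed.

Lemma cd_mul_scall n r x y : cd_mul n (cd_scal n r x) y = cd_scal n r (cd_mul n x y).
Proof. apply cd_mul_scal. Qed.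

Lemma cd_mul_scalr n r x y : cd_mul n x (cd_scal n r y) = cd_scal n r (cd_mul n x y).
Proof. apply cd_mul_scal. Qed.

Lemma cd_mul_oppl n x y : cd_mul n (cd_opp n x) y = cd_opp n (cd_mul n x y).
Proof. rewrite !cd_opp_scal; apply cd_mul_scall. Qed.

Lemma cd_mul_oppr n x y : cd_mul n x (cd_opp n y) = cd_opp n (cd_mul n x y).
Proof. rewrite !cd_opp_scal; apply cd_mul_scalr. Qed.

Lemma cd_mul_const n r :
  (forall y, cd_mul n (cd_const n r) y = cd_scal n r y) /\
  (forall y, cd_mul n y (cd_const n r) = cd_scal n r y).
Proof.
  revert r; induction n as [|n IH]; simpl; [split; intros; ring|].
  intro r; destruct (IH r) as [IHl IHr], (IH 0) as [IH0l IH0r].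
  split; intros []; simpl; rewrite ?cd_conj_const, ?IHl, ?IHr, ?IH0l, ?IH0r;
    f_equal; cd_linear.
Qed.

Lemma cd_mul_constl n r y : cd_mul n (cd_const n r) y = cd_scal n r y.
Proof. apply cd_mul_const. Qed.

Lemma cd_mul_constr n r y : cd_mul n y (cd_const n r) = cd_scal n r y.
Proof. apply cd_mul_const. Qed.

Lemma cd_mul_conj_sym n x y :
  cd_add n (cd_mul n x (cd_conj n y)) (cd_mul n y (cd_conj n x)) =
  cd_const n (2 * cd_dot n x y).
Proof.
  unfold cd_dot; revert x y; induction n as [|n IH]; [intros; simpl; ring|].
  intros [a b] [c d]; simpl.
  rewrite !cd_conj_opp, !cd_mul_oppl, !cd_conjK.
  (* the [d^* b] terms are the polarization of the pair [(d^*, b^* )] *)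
  pose proof (IH (cd_conj n d) (cd_conj n b)) as Hdb; rewrite !cd_conjK in Hdb.
  f_equal.
  - pose proof (IH a c) as Hac.
    apply cd_ext; intro i.
    apply (f_equal (fun z => coord n z i)) in Hac, Hdb.
    rewrite !cd_re_coord in *.
    rewrite !coord_add, !coord_sub, !coord_opp, !coord_const in *.
    destruct (Nat.eqb i 0); lra.
  - cd_linear.
Qed.

Lemma cd_conj_pure n M : cd_re n M = 0 -> cd_conj n M = cd_opp n M.
Proof.
  rewrite cd_re_coord; intro H; apply cd_ext; intro i.
  rewrite coord_conj, coord_opp; destruct i; simpl; [lra | ring].
Qed.

Lemma cd_mul_pure_orth_anticomm n M N :
  cd_re n M = 0 -> cd_re n N = 0 -> cd_dot n M N = 0 ->
  cd_mul n N M = cd_opp n (cd_mul n M N).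
Proof.
  intros HM HN HMN.
  pose proof (cd_mul_conj_sym n M N) as Hsym.
  rewrite HMN, (cd_conj_pure n M HM), (cd_conj_pure n N HN), !cd_mul_oppr in Hsym.
  apply cd_ext; intro i; apply (f_equal (fun z => coord n z i)) in Hsym.
  rewrite coord_add, !coord_opp, coord_const in Hsym; rewrite coord_opp.
  destruct (Nat.eqb i 0); lra.
Qed.

Lemma cd_comm_affine n a s x b t y :
  cd_comm n (cd_add n (cd_const n a) (cd_scal n s x))
            (cd_add n (cd_const n b) (cd_scal n t y)) =
  cd_scal n (s * t) (cd_comm n x y).
Proof.
  unfold cd_comm.
  rewrite !cd_mul_addl, !cd_mul_addr, !cd_mul_constl, !cd_mul_constr,
    !cd_mul_scall, !cd_mul_scalr.
  cd_linear.
Qed.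

Lemma cd_comm_anticomm n x y :
  cd_mul n y x = cd_opp n (cd_mul n x y) -> cd_comm n x y = cd_scal n 2 (cd_mul n x y).
Proof. intro H; unfold cd_comm; rewrite H; cd_linear. Qed.

Theorem lemma11 (v : nat) (Hv : (2 <= v)%nat) (M N : CD v)
  (HM : cd_re v M = 0) (HN : cd_re v N = 0) (HMN : cd_dot v M N = 0) :
  cd_comm v (cd_exp v M) (cd_exp v N) =
  cd_scal v (2 * sinc (cd_norm v M) * sinc (cd_norm v N)) (cd_mul v M N).
Proof.
  unfold cd_exp; rewrite cd_comm_affine, cd_comm_anticomm.
  - cd_linear.
  - exact (cd_mul_pure_orth_anticomm v M N HM HN HMN).
Qed.
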